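(* Let $D$ be a digraph with $n$ vertices which contains a directed cycle, let $g$ be its girth, and let $t$ be the number of induced directed cycles of $D$. If $tg\geq n$, then $$\alpha(D)\geq\frac{g-1}{g}\left(\frac{n^g}{tg}\right)^{\frac{1}{g-1}}.$$
   Context: All digraphs are finite, loopless and strict (at most one edge from $u$ to $v$ for distinct $u,v$). The girth of a digraph is the length of its shortest directed cycle. An induced directed cycle is a directed cycle $C$ such that the induced subdigraph on $V(C)$ is exactly $C$. A subset $S\subseteq V(D)$ is acyclic if $D[S]$ contains no directed cycle; $\alpha(D)$ is the maximum size of an acyclic subset of $V(D)$. *)

From mathcomp Require Import all_boot.
Set Implicit Arguments. Unset Strict Implicit. Unset Printing Implicit Defensive.

(* A digraph on a finite vertex type V is a relation e : rel V (e x y = edge x->y),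
   which is automatically strict; looplessness is a hypothesis of the theorem. *)

Definition dicycle_set (V : finType) (e : rel V) (T : {set V}) : bool :=
  (0 < #|T|) &&
  [exists s : (#|T|).-tuple V, [&& uniq s, T == [set x in s] & cycle e s]].

Definition induced_dicycle_set (V : finType) (e : rel V) (T : {set V}) : bool :=
  (0 < #|T|) &&
  [exists s : (#|T|).-tuple V,
     [&& uniq s, T == [set x in s], cycle e s &
         [forall x in T, forall y in T, e x y ==> (y == next s x)]]].

(* number of induced directed cycles (an induced cycle is determined by its vertex set) *)
Definition num_induced_dicycles (V : finType) (e : rel V) : nat :=
  #|[set T : {set V} | induced_dicycle_set e T]|.

Definition acyclic_set (V : finType) (e : rel V) (S : {set V}) : bool :=
  [forall T : {set V}, (T \subset S) ==> ~~ dicycle_set e T].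

Definition alpha (V : finType) (e : rel V) : nat :=
  \max_(S : {set V} | acyclic_set e S) #|S|.

Definition is_girth (V : finType) (e : rel V) (g : nat) : Prop :=
  (exists T : {set V}, dicycle_set e T /\ #|T| = g) /\
  (forall T : {set V}, dicycle_set e T -> g <= #|T|).

From mathcomp Require Import all_boot zify.
From Stdlib Require Import Reals Lra.
From mathcomp Require all_order all_algebra Rstruct.

(* Keep every vertex independently with probability p.  The expected number of
   kept vertices is n p and the expected number of induced directed cycles that
   are kept entirely is the sum of p^|C|, at most t p^g.  Every directed cycle
   contains an induced one (shortcut along a chord), so deleting one vertex from
   each kept induced cycle leaves an acyclic set: alpha >= n p - t p^g for every
   p in [0, 1].  The critical point p = (n / (t g))^(1/(g-1)), which is at most 1
   because t g >= n, gives the stated bound. *)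

Set Implicit Arguments. Unset Strict Implicit. Unset Printing Implicit Defensive.

Section InducedDicycles.
Variables (V : finType) (e : rel V).

Definition induced_dicycles_in (S : {set V}) : {set {set V}} :=
  [set C | induced_dicycle_set e C & C \subset S].

Lemma induced_dicycle_setW (T : {set V}) : induced_dicycle_set e T -> dicycle_set e T.
Proof.
case/andP=> T_gt0 /existsP[s /and4P[uniq_s defT cycle_s _]].
by rewrite /dicycle_set T_gt0; apply/existsP; exists s; rewrite uniq_s defT cycle_s.
Qed.

Lemma dicycle_setP (T : {set V}) : dicycle_set e T ->
  exists s : seq V, [/\ uniq s, T = [set x in s], cycle e s & s != [::]].
Proof.
case/andP=> T_gt0 /existsP[s /and3P[uniq_s /eqP defT cycle_s]].
by exists s; split; rewrite // -size_eq0 size_tuple -lt0n.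
Qed.

Lemma induced_dicycle_set_chordless (s : seq V) :
  uniq s -> cycle e s -> s != [::] ->
  {in s &, forall x y, e x y -> y = next s x} ->
  induced_dicycle_set e [set x in s].
Proof.
move=> uniq_s cycle_s s_nil chordless.
have card_s : #|[set x in s]| = size s by rewrite cardsE; apply/card_uniqP.
have size_s : size s == #|[set x in s]| by rewrite card_s.
apply/andP; split; first by rewrite card_s lt0n size_eq0.
apply/existsP; exists (Tuple size_s); rewrite /= uniq_s eqxx cycle_s /=.
apply/forall_inP=> x; rewrite inE => xs; apply/forall_inP=> y; rewrite inE => ys.
by apply/implyP=> exy; rewrite (chordless x y).
Qed.

Hypothesis loopless : forall x : V, ~~ e x x.

Lemma dicycle_set_card_gt1 (T : {set V}) : dicycle_set e T -> 1 < #|T|.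
Proof.
case/dicycle_setP=> s [uniq_s -> cycle_s s_nil].
rewrite cardsE (card_uniqP uniq_s).
case: s => [|x [|y s]] //= in uniq_s s_nil cycle_s *.
by move: cycle_s; rewrite andbT (negbTE (loopless x)).
Qed.

(* The chord x -> y closes the arc of s running from y to x into a shorter cycle. *)
Lemma chord_shortcut (s : seq V) (x y : V) :
  uniq s -> cycle e s -> x \in s -> y \in s -> e x y -> y != next s x ->
  exists s' : seq V,
    [/\ uniq s', cycle e s', s' != [::], size s' < size s & {subset s' <= s}].
Proof.
move=> uniq_s cycle_s xs ys exy y_next.
have xy : x != y by apply: contraTneq exy => ->; exact: loopless.
case/rot_to: ys => i r def_r.
have xr : x \in r by move: xs; rewrite -(mem_rot i) def_r inE (negbTE xy).
case/splitPr: xr def_r => r1 r2 def_r.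
have uniq_r : uniq (y :: r1 ++ x :: r2) by rewrite -def_r rot_uniq.
have cycle_r : cycle e (y :: r1 ++ x :: r2) by rewrite -def_r rot_cycle.
exists (y :: rcons r1 x); split=> //.
- by move: uniq_r; rewrite -cat_rcons -cat_cons cat_uniq => /andP[].
- rewrite /= rcons_path last_rcons exy andbT.
  by move: cycle_r; rewrite /= -cat_rcons rcons_cat cat_path => /andP[].
- case: r2 => [|z r2] in def_r uniq_r cycle_r *; last first.
    by rewrite -(size_rot i s) def_r /= size_rcons size_cat /=; lia.
  case/negP: y_next; rewrite -(next_rot i uniq_s) def_r next_nth.
  have x_r1 : x \notin r1.
    by move: uniq_r; rewrite /= cats1 rcons_uniq => /andP[_ /andP[]].
  have -> : x \in y :: r1 ++ [:: x] by rewrite inE mem_cat inE eqxx !orbT.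
  rewrite /= [y == x]eq_sym (negbTE xy).
  rewrite index_cat (negbTE x_r1) /= eqxx addn0 nth_default //.
  by rewrite size_cat /= addn1.
- move=> z; rewrite inE mem_rcons inE => z_r.
  rewrite -(mem_rot i) def_r inE mem_cat inE.
  by case/orP: z_r => [->|/orP[]->]; rewrite ?orbT.
Qed.

Lemma cycle_contains_induced (s : seq V) : uniq s -> cycle e s -> s != [::] ->
  exists2 C, induced_dicycle_set e C & C \subset [set x in s].
Proof.
have [n] := ubnP (size s); elim: n s => // n IHn s size_s uniq_s cycle_s s_nil.
have [chordless|] := boolP [forall x in s, forall y in s, e x y ==> (y == next s x)].
  exists [set x in s] => //; apply: induced_dicycle_set_chordless => // x y xs ys exy.
  by move/forall_inP/(_ x xs)/forall_inP/(_ y ys)/implyP/(_ exy)/eqP: chordless.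
rewrite negb_forall_in => /exists_inP[x xs]; rewrite negb_forall_in.
case/exists_inP=> y ys; rewrite negb_imply => /andP[exy y_next].
have [s' [uniq_s' cycle_s' s'_nil lt_s's sub_s's]] :=
  chord_shortcut uniq_s cycle_s xs ys exy y_next.
have [C induced_C sub_Cs'] := IHn s' (leq_trans lt_s's size_s) uniq_s' cycle_s' s'_nil.
exists C => //; apply: subset_trans sub_Cs' _.
by apply/subsetP=> z; rewrite !inE; exact: sub_s's.
Qed.

Lemma dicycle_set_contains_induced (T : {set V}) : dicycle_set e T ->
  exists2 C, induced_dicycle_set e C & C \subset T.
Proof. by case/dicycle_setP=> s [uniq_s -> cycle_s s_nil]; exact: cycle_contains_induced. Qed.

Lemma acyclic_set_induced_free (S : {set V}) :
  induced_dicycles_in S = set0 -> acyclic_set e S.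
Proof.
move=> no_induced; apply/forallP=> T; apply/implyP=> sub_TS; apply/negP=> cycle_T.
have [C induced_C sub_CT] := dicycle_set_contains_induced cycle_T.
have : C \in induced_dicycles_in S by rewrite inE induced_C (subset_trans sub_CT sub_TS).
by rewrite no_induced inE.
Qed.

Lemma induced_dicycles_in_setD1 (S C : {set V}) (x : V) :
  C \in induced_dicycles_in S -> x \in C ->
  induced_dicycles_in (S :\ x) \proper induced_dicycles_in S.
Proof.
rewrite inE => /andP[induced_C sub_CS] xC; apply/properP; split.
  apply/subsetP=> D; rewrite !inE => /andP[-> sub_DS].
  exact: subset_trans sub_DS (subsetDl _ _).
exists C; first by rewrite inE induced_C.
by rewrite inE induced_C; apply/subsetPn; exists x; rewrite // !inE eqxx.
Qed.

Lemma exists_acyclic_card_ge (S : {set V}) :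
  exists2 A, acyclic_set e A & #|S| <= #|A| + #|induced_dicycles_in S|.
Proof.
have [n] := ubnP #|induced_dicycles_in S|; elim: n S => // n IHn S lt_n.
have [no_induced|[C CS]] := set_0Vmem (induced_dicycles_in S).
  by exists S; [exact: acyclic_set_induced_free | exact: leq_addr].
have [x xC] : exists x, x \in C.
  by apply/set0Pn; move: CS; rewrite inE => /andP[/andP[C_gt0 _] _]; rewrite -card_gt0.
have xS : x \in S by move: CS; rewrite inE => /andP[_ /subsetP]; apply.
have lt_SxS := proper_card (induced_dicycles_in_setD1 CS xC).
have [A acyclic_A le_Sx] := IHn (S :\ x) (leq_trans lt_SxS lt_n).
by exists A => //; rewrite (cardsD1 x S) xS; lia.
Qed.

Lemma card_le_induced_add_alpha (S : {set V}) :
  #|S| <= #|induced_dicycles_in S| + alpha e.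
Proof.
have [A acyclic_A le_SA] := exists_acyclic_card_ge S.
by rewrite addnC; apply: leq_trans le_SA _; rewrite leq_add2r leq_bigmax_cond.
Qed.

End InducedDicycles.

Module FirstMoment.
Import all_order all_algebra Rstruct Order.TTheory GRing.Theory Num.Theory.
Local Open Scope ring_scope.

Section RandomSubset.
Variables (R : comPzRingType) (T : finType) (p : R).

Definition bernoulli_weight (f : {ffun T -> bool}) : R :=
  \prod_x (if f x then p else 1 - p).

Lemma sum_bernoulli_weight_subset (A : {set T}) :
  \sum_f bernoulli_weight f * (A \subset [set x | f x])%:R = p ^+ #|A|.
Proof.
pose F x (b : bool) := if b then p else if x \in A then 0 else 1 - p.
transitivity (\sum_(f : {ffun T -> bool}) \prod_x F x (f x)).
  apply: eq_bigr => f _; have [sub_Af|] := boolP (A \subset _).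
    rewrite mulr1; apply: eq_bigr => x _; rewrite /F.
    case fx: (f x) => //; case xA: (x \in A) => //.
    by move/subsetP/(_ x xA): sub_Af; rewrite inE fx.
  case/subsetPn=> x xA; rewrite inE => /negbTE fx.
  by rewrite mulr0 (bigD1 x) //= /F fx xA mul0r.
rewrite -bigA_distr_bigA -prodr_const (big_mkcond (mem A)) /=.
apply: eq_bigr => x _; rewrite big_bool /F /=.
by case: (x \in A); rewrite ?addr0 // addrC subrK.
Qed.

Lemma sum_bernoulli_weight : \sum_f bernoulli_weight f = 1.
Proof.
rewrite -(expr0 p) -(cards0 T) -(sum_bernoulli_weight_subset set0).
by apply: eq_bigr => f _; rewrite sub0set mulr1.
Qed.

Lemma expected_card : \sum_f bernoulli_weight f * #|[set x | f x]|%:R = #|T|%:R * p.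
Proof.
have card_sub1 (S : {set T}) : #|S|%:R = \sum_x ([set x] \subset S)%:R :> R.
  rewrite -sum1_card natr_sum big_mkcond; apply: eq_bigr => x _.
  by rewrite sub1set; case: (x \in S).
under eq_bigr do rewrite card_sub1 mulr_sumr.
rewrite exchange_big mulr_natl -sumr_const.
by apply: eq_bigr => x _; rewrite sum_bernoulli_weight_subset cards1.
Qed.

Lemma expected_count_subsets (P : pred {set T}) :
  \sum_f bernoulli_weight f * #|[set A | P A & A \subset [set x | f x]]|%:R =
  \sum_(A | P A) p ^+ #|A|.
Proof.
have count_sub (S : {set T}) :
    #|[set A | P A & A \subset S]|%:R = \sum_(A | P A) (A \subset S)%:R :> R.
  rewrite -sum1_card natr_sum big_mkcond [RHS]big_mkcond; apply: eq_bigr => A _.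
  by rewrite inE; case: (P A); case: (A \subset S).
under eq_bigr do rewrite count_sub mulr_sumr.
by rewrite exchange_big; apply: eq_bigr => A _; rewrite sum_bernoulli_weight_subset.
Qed.

End RandomSubset.

Lemma bernoulli_weight_ge0 (R : numDomainType) (T : finType) (p : R)
  (f : {ffun T -> bool}) : 0 <= p <= 1 -> 0 <= bernoulli_weight p f.
Proof.
by case/andP=> p_ge0 p_le1; apply: prodr_ge0 => x _; case: (f x); rewrite ?subr_ge0.
Qed.

Lemma exists_ge_weighted_mean (R : realDomainType) (I : finType) (w F : I -> R) :
  (forall i, 0 <= w i) -> \sum_i w i = 1 -> exists i, \sum_j w j * F j <= F i.
Proof.
move=> w_ge0 sum_w; have [i0 _|I0] := pickP (@predT I); last first.
  by move: sum_w; rewrite big_pred0 // => /eqP; rewrite eq_sym oner_eq0.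
case: (@arg_maxP _ _ _ i0 xpredT F erefl) => i _ F_max; exists i.
rewrite -[F i]mul1r -sum_w mulr_suml; apply: ler_sum => j _.
by apply: ler_wpM2l; [exact: w_ge0 | exact: F_max].
Qed.

Lemma alpha_ge_first_moment (R : realDomainType) (V : finType) (e : rel V)
    (g : nat) (p : R) :
  (forall x, ~~ e x x) ->
  (forall C, induced_dicycle_set e C -> (g <= #|C|)%nat) -> 0 <= p <= 1 ->
  #|V|%:R * p - (num_induced_dicycles e)%:R * p ^+ g <= (alpha e)%:R.
Proof.
move=> loopless girth_le p01; have /andP[p_ge0 p_le1] := p01.
pose F (f : {ffun V -> bool}) : R :=
  #|[set x | f x]|%:R - #|induced_dicycles_in e [set x | f x]|%:R.
have [f mean_le] := exists_ge_weighted_mean F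
  (fun f => bernoulli_weight_ge0 f p01) (sum_bernoulli_weight V p).
have cycles_le : \sum_(C | induced_dicycle_set e C) p ^+ #|C| <=
    (num_induced_dicycles e)%:R * p ^+ g.
  rewrite mulr_natl -sumr_const big_set /=.
  by apply: ler_sum => C /girth_le; exact: ler_wiXn2l.
apply: le_trans (_ : F f <= _).
  apply: le_trans mean_le; rewrite /F.
  under eq_bigr do rewrite mulrBr.
  by rewrite sumrB expected_card expected_count_subsets lerB.
by rewrite /F lerBlDl -natrD ler_nat card_le_induced_add_alpha.
Qed.

Local Close Scope ring_scope.
Local Open Scope R_scope.

Lemma alpha_ge_first_moment_R (V : finType) (e : rel V) (g : nat) (p : R) :
  (forall x, ~~ e x x) ->
  (forall C, induced_dicycle_set e C -> (g <= #|C|)%nat) -> 0 <= p <= 1 ->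
  INR #|V| * p - INR (num_induced_dicycles e) * p ^ g <= INR (alpha e).
Proof.
move=> loopless girth_le [/RleP p_ge0 /RleP p_le1]; rewrite RpowE !INRE.
by apply/RleP/alpha_ge_first_moment => //; rewrite p_ge0 p_le1.
Qed.

End FirstMoment.

Local Open Scope R_scope.

Lemma pow_Rpower_inv (x : R) (k : nat) :
  0 < x -> (0 < k)%nat -> Rpower x (1 / INR k) ^ k = x.
Proof.
move=> x_gt0 k_gt0; have k_pos : 0 < INR k by apply: lt_0_INR; lia.
rewrite -Rpower_pow; last exact: exp_pos.
rewrite Rpower_mult.
by replace (1 / INR k * INR k) with 1 by (field; lra); rewrite Rpower_1.
Qed.

Lemma Rpower_pow_inv (x : R) (k : nat) :
  0 < x -> (0 < k)%nat -> Rpower (x ^ k) (1 / INR k) = x.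
Proof.
move=> x_gt0 k_gt0; have k_pos : 0 < INR k by apply: lt_0_INR; lia.
rewrite -Rpower_pow // Rpower_mult.
by replace (INR k * (1 / INR k)) with 1 by (field; lra); rewrite Rpower_1.
Qed.

(* p is the critical point of p |-> n p - t p^(k+1). *)
Lemma first_moment_at_critical_point (n t : R) (k : nat) :
  (0 < k)%nat -> 0 < n -> n <= t * INR k.+1 ->
  let p := Rpower (n / (t * INR k.+1)) (1 / INR k) in
  [/\ 0 <= p, p <= 1 &
      n * p - t * p ^ k.+1 =
      INR k / INR k.+1 * Rpower (n ^ k.+1 / (t * INR k.+1)) (1 / INR k)].
Proof.
move=> k_gt0 n_gt0 n_le p.
have k1_gt0 : 0 < INR k.+1 by apply: lt_0_INR; lia.
have t_gt0 : 0 < t by nra.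
set q := n / (t * INR k.+1).
have q_gt0 : 0 < q by apply: Rdiv_lt_0_compat; nra.
have q_le1 : q <= 1.
  apply: (Rmult_le_reg_r (t * INR k.+1)); first nra.
  by rewrite /q /Rdiv Rmult_assoc Rinv_l; lra.
have p_gt0 : 0 < p by apply: exp_pos.
have pk : p ^ k = q by exact: pow_Rpower_inv.
split; first lra.
- apply: Rnot_lt_le => p_gt1.
  have : 1 < p ^ k by apply: Rlt_pow_R1 => //; lia.
  lra.
- have -> : n ^ k.+1 / (t * INR k.+1) = n ^ k * q.
    by rewrite /q -tech_pow_Rmult; field; lra.
  rewrite -Rpower_mult_distr //; last exact: pow_lt.
  rewrite Rpower_pow_inv // -/p -tech_pow_Rmult pk /q.
  rewrite S_INR in k1_gt0 *; field; lra.
Qed.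

Local Close Scope R_scope.

Theorem mainTheorem3 (V : finType) (e : rel V) (g : nat)
  (loopless : forall x : V, ~~ e x x)
  (hg : is_girth e g)
  (htg : #|V| <= num_induced_dicycles e * g) :
  (INR (alpha e) >=
   (INR g - 1) / INR g *
   Rpower (INR #|V| ^ g / (INR (num_induced_dicycles e) * INR g)) (1 / (INR g - 1)))%R.
Proof.
case: hg => [[C0 [cycle_C0 card_C0]] girth_min].
have g_gt1 : 1 < g by rewrite -card_C0 (dicycle_set_card_gt1 loopless).
have n_gt0 : 0 < #|V| by apply: leq_trans (ltnW g_gt1) _; rewrite -card_C0 max_card.
have girth_le C : induced_dicycle_set e C -> g <= #|C|.
  by move/induced_dicycle_setW; exact: girth_min.
have [k def_g k_gt0] : exists2 k, g = k.+1 & 0 < k by exists g.-1; lia.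
have n_pos : (0 < INR #|V|)%R by apply: lt_0_INR; lia.
have n_le : (INR #|V| <= INR (num_induced_dicycles e) * INR k.+1)%R.
  by rewrite -mult_INR; apply: le_INR; lia.
rewrite def_g in girth_le *; have -> : (INR k.+1 - 1 = INR k)%R by rewrite S_INR; ring.
have [p_ge0 p_le1 <-] := first_moment_at_critical_point k_gt0 n_pos n_le.
by apply/Rle_ge/FirstMoment.alpha_ge_first_moment_R.
Qed.
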